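(* Let $d\ge 2$. For $B\ge 1$ let $P_1(d,B)$ be the set of monic polynomials of degree $d$ with integer coefficients, all bounded in absolute value by $B$, and with constant coefficient $1$; let $R_1(d,B)\subseteq P_1(d,B)$ be the subset of those polynomials that are reducible over $\mathbb{Z}$. Then the coefficient vectors $(a_1,\dots,a_{d-1})$ of the polynomials in $R_1(d,B)$ (for all $B$) lie on an algebraic hypersurface of $\mathbb{C}^{d-1}$, and consequently \[\frac{|R_1(d,B)|}{|P_1(d,B)|}=O\!\left(\frac1B\right)\quad (B\to\infty).\] *)

From HB Require Import structures.
From mathcomp Require Import all_boot all_order all_algebra all_field.
From mathcomp Require Import mpoly.
From Stdlib Require Import ClassicalDescription.

Set Implicit Arguments.
Unset Strict Implicit.
Unset Printing Implicit Defensive.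

Import Order.TTheory GRing.Theory Num.Theory.
Local Open Scope ring_scope.

Definition reducibleZ (p : {poly int}) : Prop :=
  p != 0 /\ p \isn't a GRing.unit /\
  exists q r : {poly int}, p = q * r /\ q \isn't a GRing.unit /\
                           r \isn't a GRing.unit.

Definition reducibleZb (p : {poly int}) : bool :=
  if excluded_middle_informative (reducibleZ p) then true else false.

(* x^d + a_{d-1} x^{d-1} + ... + a_1 x + 1, with a : 'I_(d-1) -> int,
   a i being the coefficient a_{i+1} of x^{i+1}. *)
Definition polyOf (d : nat) (a : 'I_(d.-1) -> int) : {poly int} :=
  'X^d + \sum_(i < d.-1) (a i)%:P * 'X^(i.+1) + 1.

Definition centered (B : nat) (i : 'I_(2 * B).+1) : int := (i : int) - (B : int).

Definition P1 (d B : nat) : seq {poly int} :=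
  undup [seq polyOf (fun i => centered (f i)) | f : {ffun 'I_(d.-1) -> 'I_(2 * B).+1}].

Definition R1 (d B : nat) : seq {poly int} := [seq p <- P1 d B | reducibleZb p].

From HB Require Import structures.
From mathcomp Require Import all_boot all_order all_algebra all_field.
From mathcomp Require Import mpoly.
From mathcomp Require Import fingroup perm zify.
From Stdlib Require Import ClassicalDescription.

Import Order.TTheory GRing.Theory Num.Theory.
Local Open Scope ring_scope.
Set Implicit Arguments.
Unset Strict Implicit.

(* If p = q r with q, r non-units of Z[X], then q has leading and constant
   coefficients +-1, so over C we get q = +-prod (X - z) with (prod z)^2 = 1: a
   proper nonempty part of the roots of p has squared product 1.  The roots of p
   are therefore zeros of the symmetric polynomial
   prod_S ((prod_(i in S) x_i)^2 - 1), S proper and nonempty, which by the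
   fundamental theorem on symmetric polynomials and Vieta's formulas is a
   polynomial F in the coefficients a_1, ..., a_(d-1) of p.  F is nonzero since
   it does not vanish at the polynomial with roots -2 (d-1 times) and -2^(1-d).
   The Schwartz-Zippel bound #(zeros of F in S^n) <= deg F * #S^(n-1), proved by
   induction on n through the leading coefficient in the last variable, then
   gives #R_1(d,B) <= deg F * (2B+1)^(d-2) = deg F * #P_1(d,B) / (2B+1). *)

Section MuniCoef.
Variables (n : nat) (R : nzRingType).
Implicit Types (p : {mpoly R[n.+1]}) (m : 'X_{1..n.+1}).

Definition mrestr m : 'X_{1..n} := [multinom m (widen_ord (leqnSn n) j) | j < n].

Lemma mdeg_mrestr m : (mdeg (mrestr m) + m ord_max = mdeg m)%N.
Proof.
rewrite !mdegE big_ord_recr /=; congr (_ + _)%N.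
by apply: eq_bigr => j _; rewrite mnmE.
Qed.

Lemma mrestr_inj m1 m2 :
  mrestr m1 = mrestr m2 -> m1 ord_max = m2 ord_max -> m1 = m2.
Proof.
move=> /mnmP e1 e2; apply/mnmP => j.
case: (unliftP ord_max j) => [j'|] -> //.
have -> : lift ord_max j' = widen_ord (leqnSn n) j'.
  by apply: val_inj; rewrite /= /bump leqNgt ltn_ord.
by have := e1 j'; rewrite !mnmE.
Qed.

Lemma coef_muni p i :
  (muni p)`_i = \sum_(m <- msupp p | m ord_max == i) p@_m *: 'X_[mrestr m].
Proof. by rewrite muniE coef_sumMXn. Qed.

Lemma mcoeff_coef_muni p m : ((muni p)`_(m ord_max))@_(mrestr m) = p@_m.
Proof.
rewrite coef_muni raddf_sum /=.
have other m' : m' != m -> m' ord_max == m ord_max ->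
    (p@_m' *: 'X_[mrestr m'])@_(mrestr m) = 0.
  move=> ne /eqP e; rewrite mcoeffZ mcoeffX.
  by case: eqP => [/mrestr_inj/(_ e)/eqP|]; rewrite ?(negbTE ne) ?mulr0.
have [mp|mNp] := boolP (m \in msupp p); last first.
  have /eqP -> : p@_m == 0 by move: mNp; rewrite mcoeff_msupp negbK.
  rewrite big1_seq // => m' /andP[e mp'].
  by apply: other e; apply: contraNneq mNp => <-.
rewrite big_mkcond (bigD1_seq m) ?msupp_uniq //= eqxx mcoeffZ mcoeffX eqxx mulr1.
by rewrite big1 ?addr0 // => m' ne; case: ifP => // /(other _ ne).
Qed.

Lemma muni_eq0 p : (muni p == 0) = (p == 0).
Proof.
apply/eqP/eqP => [p0|->]; last exact: muni0.
by apply/mpolyP => m; rewrite -mcoeff_coef_muni p0 coef0 !mcoeff0.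
Qed.

Lemma msize_coef_muni p i : (msize ((muni p)`_i) <= msize p - i)%N.
Proof.
rewrite coef_muni (leq_trans (msize_sum _ _ _)) //.
apply/bigmax_leqP_seq => m mp /eqP mi.
rewrite (leq_trans (mmeasureZ_le _ _ _)) // msizeX.
by have := msize_mdeg_lt mp; rewrite -mdeg_mrestr mi; lia.
Qed.

End MuniCoef.

Lemma meval_muni (n : nat) (R : comRingType) (p : {mpoly R[n.+1]}) (v : 'I_n.+1 -> R) :
  p.@[v] = (map_poly (meval (fun i => v (widen_ord (leqnSn n) i))) (muni p)).[v ord_max].
Proof.
rewrite muniE mevalE raddf_sum horner_sum; apply: eq_bigr => m _ /=.
rewrite map_polyZ /= map_polyXn hornerZ hornerXn mevalZ mevalX big_ord_recr /=.
by rewrite mulrA; congr (_ * _ * _); apply: eq_bigr => i _; rewrite mnmE.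
Qed.

Section SchwartzZippel.
Variables (R : idomainType) (T : finType) (g : T -> R).
Hypothesis g_inj : injective g.

Definition mzeros n (p : {mpoly R[n]}) : {set {ffun 'I_n -> T}} :=
  [set f : {ffun 'I_n -> T} | p.@[fun i => g (f i)] == 0].

Definition ffun_restr n (f : {ffun 'I_n.+1 -> T}) : {ffun 'I_n -> T} :=
  [ffun j => f (widen_ord (leqnSn n) j)].

Lemma card_roots_le (q : {poly R}) :
  q != 0 -> (#|[set t | root q (g t)]| <= (size q).-1)%N.
Proof.
move=> q0; set A := [set t | _].
have rootA : all (root q) (map g (enum A)).
  by apply/allP => y /mapP[t]; rewrite mem_enum inE => ? ->.
have := max_poly_roots q0 rootA; rewrite map_inj_uniq ?enum_uniq // size_map -cardE.
by move=> /(_ isT); case: (size q).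
Qed.

Lemma ffun_restr_inj n (f1 f2 : {ffun 'I_n.+1 -> T}) :
  ffun_restr f1 = ffun_restr f2 -> f1 ord_max = f2 ord_max -> f1 = f2.
Proof.
move=> e12 emax; apply/ffunP => j; case: (unliftP ord_max j) => [j'|] -> //.
have -> : lift ord_max j' = widen_ord (leqnSn n) j'.
  by apply: val_inj; rewrite /= /bump leqNgt ltn_ord.
by have := congr1 (fun h : {ffun 'I_n -> T} => h j') e12; rewrite !ffunE.
Qed.

Lemma fiber_last_inj n (A : {set {ffun 'I_n.+1 -> T}}) f' :
  {in [set f in A | ffun_restr f == f'] &,
    injective (fun f : {ffun 'I_n.+1 -> T} => f ord_max)}.
Proof.
move=> f1 f2; rewrite !inE => /andP[_ /eqP e1] /andP[_ /eqP e2].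
by apply: ffun_restr_inj; rewrite e1 e2.
Qed.

Lemma card_mzeros_fiber n (p : {mpoly R[n.+1]}) (f' : {ffun 'I_n -> T}) :
  (lead_coef (muni p)).@[fun i => g (f' i)] != 0 ->
  (#|[set f in mzeros p | ffun_restr f == f']| <= (size (muni p)).-1)%N.
Proof.
move=> lc0; pose q := map_poly (meval (fun i => g (f' i))) (muni p).
have size_q : size q = size (muni p) by rewrite size_map_poly_id0.
have q0 : q != 0.
  rewrite -size_poly_eq0 size_q size_poly_eq0 -lead_coef_eq0.
  by apply: contra lc0 => /eqP ->; rewrite raddf0.
rewrite -(card_in_imset (@fiber_last_inj n (mzeros p) f')) -size_q.
rewrite (leq_trans _ (card_roots_le q0)) //.
apply/subset_leq_card/subsetP => t /imsetP[f]; rewrite !inE => /andP[pf /eqP rf] ->.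
rewrite /root (meval_muni p) in pf; rewrite /q -rf; congr (_ == 0): pf.
by congr (horner _ _); apply: eq_map_poly => a; apply: meval_eq => i; rewrite ffunE.
Qed.

Lemma card_mzeros_muni n (p : {mpoly R[n.+1]}) :
  (#|mzeros p|
     <= #|mzeros (lead_coef (muni p))| * #|T| + #|T| ^ n * (size (muni p)).-1)%N.
Proof.
rewrite -sum1_card (partition_big (@ffun_restr n) xpredT) //=.
apply: (@leq_trans (\sum_(f' : {ffun 'I_n -> T})
   ((if f' \in mzeros (lead_coef (muni p)) then #|T| else 0) + (size (muni p)).-1))%N).
  apply: leq_sum => f' _; rewrite sum1dep_card.
  case: ifPn => [_|]; last by rewrite inE => /card_mzeros_fiber; rewrite add0n.
  rewrite (leq_trans _ (leq_addr _ _)) //.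
  by rewrite -(card_in_imset (@fiber_last_inj n (mzeros p) f')) max_card.
by rewrite big_split /= -big_mkcond !sum_nat_const card_ffun card_ord.
Qed.

Lemma card_mzeros_le n (p : {mpoly R[n]}) : p != 0 ->
  (#|mzeros p| * #|T| <= (msize p).-1 * #|T| ^ n)%N.
Proof.
elim: n p => [|n IH] p p0.
  rewrite (_ : mzeros p = set0) ?cards0 //; apply/setP => f; rewrite !inE.
  rewrite [p]nvar0_mpolyC mevalC.
  by apply: contraNF p0 => /eqP c0; rewrite [p]nvar0_mpolyC c0.
set lc := lead_coef (muni p); set k := (size (muni p)).-1.
have lc0 : lc != 0 by rewrite lead_coef_eq0 muni_eq0.
have size_lc : ((msize lc).-1 + k <= (msize p).-1)%N.
  have : (0 < msize lc)%N by rewrite lt0n msize_poly_eq0.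
  by have := msize_coef_muni p k; rewrite -lead_coefE -/lc; lia.
have bound : (#|mzeros p| <= ((msize lc).-1 + k) * #|T| ^ n)%N.
  rewrite mulnDl (leq_trans (card_mzeros_muni p)) // -/lc -/k.
  by rewrite leq_add ?IH // mulnC.
rewrite expnS [(#|T| * _)%N]mulnC mulnA leq_mul // (leq_trans bound) //.
by rewrite leq_mul.
Qed.
End SchwartzZippel.

Section ReducibilityPoly.
Variable R : idomainType.

Definition subprod_poly n : {mpoly R[n]} :=
  \prod_(S : {set 'I_n} | (S != set0) && (S != setT)) ((\prod_(i in S) 'X_i) ^+ 2 - 1).

Lemma meval_subprod_poly n (x : 'I_n -> R) :
  (subprod_poly n).@[x] =
  \prod_(S : {set 'I_n} | (S != set0) && (S != setT)) ((\prod_(i in S) x i) ^+ 2 - 1).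
Proof.
rewrite rmorph_prod /=; apply: eq_bigr => S _.
rewrite rmorphB rmorphXn rmorph1 rmorph_prod /=.
by congr (_ ^+ 2 - 1); apply: eq_bigr => i _; rewrite mevalXU.
Qed.

Lemma subprod_poly_sym n : subprod_poly n \is symmetric.
Proof.
apply/issymP => s; rewrite rmorph_prod /=.
rewrite [RHS](reindex_inj (imset_inj (@perm_inj _ s))).
apply: eq_big => [S|S _].
  rewrite imset_eq0 !eqEcard !subsetT !cardsT card_imset //; exact: perm_inj.
rewrite rmorphB rmorphXn rmorph1 rmorph_prod big_imset /=; last first.
  by move=> ? ? _ _; apply: perm_inj.
by congr (_ ^+ 2 - 1); apply: eq_bigr => i _; rewrite /msym mmapX mmap1U.
Qed.

Lemma subprod_poly_cat_root n (rs1 rs2 : seq R) (h : size (rs1 ++ rs2) == n) :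
  (0 < size rs1)%N -> (0 < size rs2)%N -> (\prod_(z <- rs1) z) ^+ 2 = 1 ->
  (subprod_poly n).@[tnth (Tuple h)] = 0.
Proof.
move=> rs1_gt0 rs2_gt0 prod1; rewrite meval_subprod_poly; apply/eqP/prodf_eq0.
have size_n : (size rs1 + size rs2 = n)%N by rewrite -size_cat (eqP h).
have [lt0n ltpn] : (0 < n)%N /\ (n.-1 < n)%N by lia.
exists [set i : 'I_n | (i < size rs1)%N].
  apply/andP; split; first by apply/set0Pn; exists (Ordinal lt0n); rewrite inE.
  apply/negP => /eqP/setP/(_ (Ordinal ltpn)); rewrite !inE /=; lia.
rewrite subr_eq0; apply/eqP; rewrite -[RHS]prod1; congr (_ ^+ 2).
rewrite (big_nth 0) big_mkord (big_ord_widen n (nth 0 rs1)) -?size_n ?leq_addr //.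
apply: eq_big => i; first by rewrite inE.
by rewrite inE => lt_i; rewrite (tnth_nth 0) /= nth_cat lt_i.
Qed.

(* Entry k is e_(k+1) of the roots of X^(m+1) + a_m X^m + ... + a_1 X + 1 written
   in the coefficients (Vieta): (-1)^(k+1) a_(m-k), where 'X_j stands for a_(j+1)
   and a_0 = 1. *)
Definition esym_coefs m : m.+1.-tuple {mpoly R[m]} :=
  [tuple (-1) ^+ k.+1 * (if unlift ord_max k is Some j then 'X_(rev_ord j) else 1)
   | k < m.+1].

Definition reducibility_poly m : {mpoly R[m]} :=
  sval (sym_fundamental (subprod_poly_sym m.+1)) \mPo esym_coefs m.

Lemma meval_reducibility_poly m (cs : m.+1.-tuple R) :
  let p := \prod_(c <- cs) ('X - c%:P) in p`_0 = 1 ->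
  (reducibility_poly m).@[fun i => p`_i.+1] = (subprod_poly m.+1).@[tnth cs].
Proof.
move=> p p0; have [symE _] := svalP (sym_fundamental (subprod_poly_sym m.+1)).
rewrite -[in RHS]symE !comp_mpoly_meval; apply: meval_eq => k.
rewrite !tnth_map !tnth_ord_tuple mevalM rmorphXn rmorphN rmorph1 /=.
have -> : (mesym m.+1 R k.+1).@[tnth cs] = (-1) ^+ k.+1 * p`_(m.+1 - k.+1).
  by have := mroots_coeff cs (lift ord0 k); rewrite /= -/p => ->; rewrite signrMK.
congr (_ * _); case: unliftP => [j|] -> /=; last by rewrite subnn p0 rmorph1.
by rewrite mevalXU /= /bump leqNgt ltn_ord subSS subnSK.
Qed.

End ReducibilityPoly.

Section Witness.
Variables (R : numFieldType) (m : nat).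

Definition witness_roots : m.+1.-tuple R :=
  [tuple if (i < m)%N then -2 else - (2 ^+ m)^-1 | i < m.+1].

Lemma witness_roots_coef0 : (\prod_(c <- witness_roots) ('X - c%:P))`_0 = 1.
Proof.
rewrite -horner_coef0 horner_prod big_tuple big_ord_recr /= tnth_mktuple ltnn.
rewrite (eq_bigr (fun _ => 2)) => [|i _]; last first.
  by rewrite tnth_mktuple /= ltn_ord hornerXsubC sub0r opprK.
by rewrite prodr_const card_ord hornerXsubC sub0r opprK divff // expf_neq0 ?pnatr_eq0.
Qed.

Lemma sqr_m2X j : ((-2 : R) ^+ j) ^+ 2 = (4 ^ j)%:R.
Proof. by rewrite exprAC sqrrN -natrX -natrX. Qed.

Lemma witness_roots_subprod (S : {set 'I_m.+1}) :
  S != set0 -> S != setT -> (\prod_(i in S) tnth witness_roots i) ^+ 2 != 1.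
Proof.
move=> S0 ST.
have m2 i : i != ord_max -> tnth witness_roots i = -2.
  move=> ne; rewrite tnth_mktuple ifT //.
  by rewrite ltn_neqAle -ltnS ltn_ord andbT; apply: contra ne => /eqP e; apply/eqP/val_inj.
have [Smax|SNmax] := boolP (ord_max \in S); last first.
  rewrite (eq_bigr (fun _ => -2)) => [|i iS]; last first.
    by apply: m2; apply: contraNneq SNmax => <-.
  by rewrite prodr_const sqr_m2X gt_eqF // ltr1n -(expn0 4) ltn_exp2l // card_gt0.
rewrite (bigD1 ord_max) //= (eq_bigr (fun _ => -2)) => [|i /andP[_]]; last exact: m2.
rewrite prodr_const tnth_mktuple ltnn exprMn sqr_m2X.
set j := #|_|; have lt_jm : (j < m)%N.
  have : (#|S| < #|[set: 'I_m.+1]|)%N by rewrite proper_card // properT.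
  rewrite cardsT card_ord.
  have -> : j = #|[predD1 S & ord_max]| by apply: eq_card => i; rewrite !inE andbC.
  by rewrite (cardD1 ord_max) Smax.
rewrite sqrrN exprVn.
have -> : ((2 : R) ^+ m) ^+ 2 = (4 ^ m)%:R by rewrite -exprM mulnC exprM -!natrX.
rewrite mulrC lt_eqF // ltr_pdivrMr ?ltr0n ?expn_gt0 //.
by rewrite mul1r ltr_nat ltn_exp2l.
Qed.

Lemma reducibility_poly_neq0 : reducibility_poly R m != 0.
Proof.
have : (subprod_poly R m.+1).@[tnth witness_roots] != 0.
  rewrite meval_subprod_poly; apply/prodf_neq0 => S /andP[S0 ST].
  by rewrite subr_eq0 witness_roots_subprod.
apply: contraNneq => F0.
by rewrite -(meval_reducibility_poly witness_roots_coef0) F0 raddf0.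
Qed.
End Witness.

Lemma int_unit_sqr (x : int) : x \is a GRing.unit -> x ^+ 2 = 1.
Proof. by rewrite qualifE => /orP[] /eqP ->. Qed.

Lemma size_nonunit_gt1 (R : idomainType) (q : {poly R}) :
  lead_coef q \is a GRing.unit -> q \isn't a GRing.unit -> (1 < size q)%N.
Proof.
move=> lq; rewrite ltnNge; apply: contra => /size1_polyC qC.
by rewrite qC lead_coefC in lq; rewrite qC rmorph_unit.
Qed.

Lemma sqr_prod_opp (R : comRingType) (rs : seq R) :
  (\prod_(z <- rs) (0 - z)) ^+ 2 = (\prod_(z <- rs) z) ^+ 2.
Proof. by rewrite -!prodrXl; apply: eq_bigr => z _; rewrite sub0r sqrrN. Qed.

Section IntFactors.
Variable R : numClosedFieldType.

Lemma int_factor_roots (q : {poly int}) :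
  lead_coef q \is a GRing.unit -> q`_0 \is a GRing.unit ->
  exists rs : seq R,
    [/\ map_poly intr q = (lead_coef q)%:~R *: \prod_(z <- rs) ('X - z%:P),
        size rs = (size q).-1 & (\prod_(z <- rs) z) ^+ 2 = 1].
Proof.
move=> lq q0; have [rs qE] := closed_field_poly_normal (map_poly (intr : int -> R) q).
have lqC : lead_coef (map_poly (intr : int -> R) q) = (lead_coef q)%:~R.
  by rewrite (lead_coef_map_inj (@intr_inj R)) ?rmorph0.
have lq0 : (lead_coef q)%:~R != 0 :> R.
  by rewrite intr_eq0; apply: contraTneq lq => ->; rewrite unitr0.
rewrite lqC in qE; exists rs; split => //.
  have := congr1 (fun s : {poly R} => size s) qE; rewrite size_scale // size_prod_XsubC.
  by rewrite (size_map_inj_poly (@intr_inj R)) ?rmorph0 // => ->.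
have := congr1 (fun s : {poly R} => s`_0 ^+ 2) qE; rewrite /= coef_map /= coefZ exprMn.
rewrite -!rmorphXn !int_unit_sqr // rmorph1 mul1r -horner_coef0 horner_prod.
by rewrite (eq_bigr (fun z => 0 - z)) ?sqr_prod_opp // => z _; rewrite hornerXsubC.
Qed.

Lemma reducibility_poly_int_root m (p : {poly int}) :
  size p = m.+2 -> p \is monic -> p`_0 = 1 -> reducibleZ p ->
  (reducibility_poly R m).@[fun i => (p`_i.+1)%:~R] = 0.
Proof.
move=> sp pm p0 [_ [_ [q [r [pqr [qu ru]]]]]].
have lqr : lead_coef q * lead_coef r = 1 by rewrite -lead_coefM -pqr (monicP pm).
have c0qr : q`_0 * r`_0 = 1 by rewrite -coef0M -pqr.
have [lq lr] : lead_coef q \is a GRing.unit /\ lead_coef r \is a GRing.unit.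
  by split; apply/unitrPr; [exists (lead_coef r) | exists (lead_coef q); rewrite mulrC].
have [q0 r0] : q`_0 \is a GRing.unit /\ r`_0 \is a GRing.unit.
  by split; apply/unitrPr; [exists r`_0 | exists q`_0; rewrite mulrC].
have [rq [qE size_rq rq1]] := int_factor_roots lq q0.
have [rr [rE size_rr _]] := int_factor_roots lr r0.
have pE : map_poly (intr : int -> R) p = \prod_(z <- rq ++ rr) ('X - z%:P).
  rewrite pqr rmorphM /= qE rE -scalerAl -scalerAr scalerA -intrM lqr.
  by rewrite scale1r big_cat.
have size_cat_rs : size (rq ++ rr) == m.+1.
  have := congr1 (fun s : {poly R} => size s) pE.
  by rewrite size_prod_XsubC (size_map_inj_poly (@intr_inj R)) ?rmorph0 // sp => -[->].
have coefE i : (p`_i)%:~R = (\prod_(c <- Tuple size_cat_rs) ('X - c%:P))`_i :> R.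
  by rewrite -pE coef_map.
rewrite (meval_eq _ (fun i => coefE i.+1)) meval_reducibility_poly -?coefE ?p0 //.
apply: subprod_poly_cat_root rq1.
  by rewrite size_rq -ltnS prednK ?size_nonunit_gt1 // ltnW ?size_nonunit_gt1.
by rewrite size_rr -ltnS prednK ?size_nonunit_gt1 // ltnW ?size_nonunit_gt1.
Qed.

End IntFactors.

Section PolyOf.
Variables (m : nat) (a : 'I_m -> int).

Lemma coef_polyOf j : (@polyOf m.+1 a)`_j =
  (j == m.+1)%:R + \sum_(i < m | i.+1 == j) a i + (j == 0)%:R.
Proof.
rewrite !coefD coefXn coef1 coef_sum [in RHS]big_mkcond; congr (_ + _ + _).
by apply: eq_bigr => i _; rewrite coefCM coefXn eq_sym; case: eqP; rewrite ?mulr1 ?mulr0.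
Qed.

Lemma polyOf_coef0 : (@polyOf m.+1 a)`_0 = 1.
Proof. by rewrite coef_polyOf big_pred0 // add0r. Qed.

Lemma coef_polyOfS (i : 'I_m) : (@polyOf m.+1 a)`_i.+1 = a i.
Proof.
rewrite coef_polyOf eqSS ltn_eqF ?add0r ?addr0 //.
by rewrite (big_pred1 i) // => k; rewrite /= eqSS.
Qed.

Lemma coef_polyOf_ge j : (m.+1 <= j)%N -> (@polyOf m.+1 a)`_j = (j == m.+1)%:R.
Proof.
move=> le_mj; rewrite coef_polyOf big_pred0 => [|i].
  by rewrite addr0 (_ : j == 0 = false) ?addr0 //; lia.
by apply/eqP; have := ltn_ord i; lia.
Qed.

Lemma size_polyOf : size (@polyOf m.+1 a) = m.+2.
Proof.
apply/eqP; rewrite eqn_leq; apply/andP; split.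
  by apply/leq_sizeP => j le_mj; rewrite coef_polyOf_ge ?(ltnW le_mj) // gtn_eqF.
rewrite ltnNge; apply/negP => /leq_sizeP/(_ _ (leqnn _)).
by rewrite coef_polyOf_ge // eqxx => /eqP; rewrite oner_eq0.
Qed.

Lemma polyOf_monic : @polyOf m.+1 a \is monic.
Proof. by rewrite monicE lead_coefE size_polyOf coef_polyOf_ge ?eqxx. Qed.

End PolyOf.

Lemma centered_inj B : injective (@centered B).
Proof. by move=> x y /addIr /eqP; rewrite eqz_nat => /eqP /val_inj. Qed.

Lemma mem_R1 m B p : p \in R1 m.+1 B ->
  exists f : {ffun 'I_m -> 'I_(2 * B).+1},
    p = @polyOf m.+1 (fun i => centered (f i)) /\ reducibleZ p.
Proof.
rewrite /R1 mem_filter /P1 mem_undup /reducibleZb => /andP[red /mapP[f _ pE]].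
by exists f; move: red; case: excluded_middle_informative => // + _; rewrite pE.
Qed.

Section Counting.
Variables (m B : nat).
Local Notation s := (2 * B).+1.
Local Notation polyOfF f := (@polyOf m.+1 (fun i => centered (f i))).

Lemma polyOfF_inj : injective (fun f : {ffun 'I_m -> 'I_s} => polyOfF f).
Proof.
move=> f1 f2 e; apply/ffunP => i; apply: centered_inj.
by have := congr1 (fun p : {poly int} => p`_i.+1) e; rewrite /= !coef_polyOfS.
Qed.

Lemma size_P1 : size (P1 m.+1 B) = (s ^ m)%N.
Proof.
rewrite /P1 undup_id ?size_image ?card_ffun ?card_ord //.
by rewrite map_inj_uniq ?enum_uniq //; exact: polyOfF_inj.
Qed.

Lemma size_R1_le (R : numClosedFieldType) :
  (size (R1 m.+1 B)
     <= #|mzeros (fun k : 'I_s => (centered k)%:~R : R) (reducibility_poly R m)|)%N.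
Proof.
rewrite -(size_image (fun f : {ffun 'I_m -> 'I_s} => polyOfF f)).
rewrite uniq_leq_size ?filter_uniq ?undup_uniq //.
move=> _ /mem_R1 [f [-> red]]; apply/imageP; exists f => //; rewrite inE.
rewrite -(@reducibility_poly_int_root R m _ _ _ _ red)
  ?size_polyOf ?polyOf_monic ?polyOf_coef0 //.
by apply/eqP/meval_eq => i; rewrite coef_polyOfS.
Qed.

Lemma R1_ratio_le (R : numClosedFieldType) : (0 < B)%N ->
  (size (R1 m.+1 B))%:R / (size (P1 m.+1 B))%:R
    <= ((msize (reducibility_poly R m)).-1)%:R / B%:R :> rat.
Proof.
move=> B_gt0.
have g_inj : injective (fun k : 'I_s => (centered k)%:~R : R).
  by move=> x y /intr_inj/centered_inj.
have := card_mzeros_le g_inj (reducibility_poly_neq0 R m); rewrite card_ord => zeros_le.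
rewrite size_P1 ler_pdivrMr ?ltr0n ?expn_gt0 // mulrAC ler_pdivlMr ?ltr0n //.
rewrite -!natrM ler_nat (leq_trans _ zeros_le) // leq_mul ?size_R1_le //; lia.
Qed.

End Counting.

Unset Implicit Arguments.

Theorem theorem5p1 (d : nat) (hd : (2 <= d)%N) :
  (exists F : {mpoly algC[d.-1]},
      F != 0 /\
      forall (B : nat) (p : {poly int}), p \in R1 d B ->
        F.@[fun i : 'I_(d.-1) => (p`_(i.+1))%:~R] = 0)
  /\
  (exists (C : rat) (B0 : nat), forall B : nat, (B0 <= B)%N -> (1 <= B)%N ->
      (size (R1 d B))%:R / (size (P1 d B))%:R <= C / B%:R).
Proof.
case: d hd => [//|m] _; split.
  exists (reducibility_poly algC m); split; first exact: reducibility_poly_neq0.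
  move=> B _ /mem_R1[f [-> red]].
  by rewrite reducibility_poly_int_root ?size_polyOf ?polyOf_monic ?polyOf_coef0.
by exists (msize (reducibility_poly algC m)).-1%:R, 0%N => B _; apply: R1_ratio_le.
Qed.
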